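(* A category $\mathbf{C}$ is a Kleene-Kozen category if and only if (a) $\mathbf{C}$ is enriched over bounded join-semilattices and strict join-preserving maps, and (b) there is an operator $(\cdot)^\ast:\mathbf{C}(X,X)\to\mathbf{C}(X,X)$ for every object $X$ such that for all objects $X,Y$ and morphisms $f:X\to X$, $g:Y\to Y$, $h:X\to X$, $k:Y\to X$: 1. $f^\ast=\mathrm{id}\lor f^\ast\circ f$; 2. $\mathrm{id}^\ast=\mathrm{id}$; 3. $f^\ast=(f\lor\mathrm{id})^\ast$; 4. if $h\circ k=k\circ g$ then $h^\ast\circ k=k\circ g^\ast$.
   Context: A category $\mathbf{C}$ is enriched over bounded join-semilattices and strict join-preserving maps if each hom-set $\mathbf{C}(X,Y)$ is a join-semilattice $(\lor)$ with a least element $\bot$, and composition preserves binary joins and $\bot$ in each argument; the order is $f\le g\iff f\lor g=g$. A Kleene-Kozen category is such an enriched category together with an operator $(\cdot)^\ast:\mathbf{C}(X,X)\to\mathbf{C}(X,X)$ for every object $X$, such that for all $f:Y\to Y$, $g:Y\to Z$, $h:X\to Y$: $g\circ f^\ast$ is the least prefixpoint of $x\mapsto g\lor x\circ f$ on $\mathbf{C}(Y,Z)$, and $f^\ast\circ h$ is the least prefixpoint of $x\mapsto h\lor f\circ x$ on $\mathbf{C}(X,Y)$. *)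

Set Implicit Arguments.
Unset Strict Implicit.

(* A category enriched over bounded join-semilattices and strict
   join-preserving maps. Composition [comp g f] is g ∘ f (first f, then g). *)
Record JSLCategory := {
  Obj :> Type;
  Hom : Obj -> Obj -> Type;
  idm : forall X, Hom X X;
  comp : forall X Y Z, Hom Y Z -> Hom X Y -> Hom X Z;
  comp_assoc : forall X Y Z W (h : Hom Z W) (g : Hom Y Z) (f : Hom X Y),
      comp h (comp g f) = comp (comp h g) f;
  comp_id_l : forall X Y (f : Hom X Y), comp (idm Y) f = f;
  comp_id_r : forall X Y (f : Hom X Y), comp f (idm X) = f;
  join : forall X Y, Hom X Y -> Hom X Y -> Hom X Y;
  bot : forall X Y, Hom X Y;
  join_assoc : forall X Y (f g h : Hom X Y), join f (join g h) = join (join f g) h;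
  join_comm : forall X Y (f g : Hom X Y), join f g = join g f;
  join_idem : forall X Y (f : Hom X Y), join f f = f;
  join_bot : forall X Y (f : Hom X Y), join f (bot X Y) = f;
  comp_join_l : forall X Y Z (g1 g2 : Hom Y Z) (f : Hom X Y),
      comp (join g1 g2) f = join (comp g1 f) (comp g2 f);
  comp_join_r : forall X Y Z (g : Hom Y Z) (f1 f2 : Hom X Y),
      comp g (join f1 f2) = join (comp g f1) (comp g f2);
  comp_bot_l : forall X Y Z (f : Hom X Y), comp (bot Y Z) f = bot X Z;
  comp_bot_r : forall X Y Z (g : Hom Y Z), comp g (bot X Y) = bot X Z
}.

Arguments Hom : clear implicits.
Arguments idm {_} X.
Arguments comp {_ X Y Z} _ _.
Arguments join {_ X Y} _ _.
Arguments bot {_} X Y.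

Definition hle (C : JSLCategory) (X Y : C) (f g : Hom C X Y) : Prop :=
  join f g = g.

Definition least_prefixpoint (C : JSLCategory) (X Y : C)
    (F : Hom C X Y -> Hom C X Y) (x : Hom C X Y) : Prop :=
  hle (F x) x /\ (forall y, hle (F y) y -> hle x y).

Definition KK_star (C : JSLCategory) (star : forall X : C, Hom C X X -> Hom C X X)
  : Prop :=
  (forall (Y Z : C) (f : Hom C Y Y) (g : Hom C Y Z),
      least_prefixpoint (fun x => join g (comp x f)) (comp g (star Y f))) /\
  (forall (X Y : C) (f : Hom C Y Y) (h : Hom C X Y),
      least_prefixpoint (fun x => join h (comp f x)) (comp (star Y f) h)).

Definition is_KleeneKozen (C : JSLCategory) : Prop :=
  exists star : forall X : C, Hom C X X -> Hom C X X, KK_star star.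

Definition star_axioms (C : JSLCategory) (star : forall X : C, Hom C X X -> Hom C X X)
  : Prop :=
  forall (X Y : C) (f : Hom C X X) (g : Hom C Y Y) (h : Hom C X X) (k : Hom C Y X),
    star X f = join (idm X) (comp (star X f) f) /\
    star X (idm X) = idm X /\
    star X f = star X (join f (idm X)) /\
    (comp h k = comp k g -> comp (star X h) k = comp k (star Y g)).

From Stdlib Require Import Setoid.

(* Both directions rest on the unfolding laws [f* = id ∨ f*∘f = id ∨ f∘f*].
   Given a Kleene-Kozen star, each of the four axioms is an antisymmetry
   argument between two least prefixpoints.  Conversely, the simulation axiom
   applied to [y ∘ (f ∨ id) = id ∘ y] (which says [y ∘ f <= y]) gives
   [y ∘ f* = y ∘ (f ∨ id)* = id* ∘ y = y]; this induction rule together with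
   monotonicity of composition shows that [g ∘ f*] is below every prefixpoint
   of [x ↦ g ∨ x ∘ f], and symmetrically on the other side. *)

Section HomOrder.

Variable C : JSLCategory.

Lemma hle_refl (X Y : C) (a : Hom C X Y) : hle a a.
Proof. apply join_idem. Qed.

Lemma hle_trans (X Y : C) (a b c : Hom C X Y) : hle a b -> hle b c -> hle a c.
Proof. unfold hle; intros Hab Hbc. rewrite <- Hbc, join_assoc, Hab. reflexivity. Qed.

Lemma hle_antisym (X Y : C) (a b : Hom C X Y) : hle a b -> hle b a -> a = b.
Proof. unfold hle; intros Hab Hba. rewrite join_comm in Hba. congruence. Qed.

Lemma hle_eq (X Y : C) (a b : Hom C X Y) : a = b -> hle a b.
Proof. intros ->; apply hle_refl. Qed.

Lemma hle_joinl (X Y : C) (a b : Hom C X Y) : hle a (join a b).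
Proof. unfold hle. rewrite join_assoc, join_idem. reflexivity. Qed.

Lemma hle_joinr (X Y : C) (a b : Hom C X Y) : hle b (join a b).
Proof. rewrite join_comm. apply hle_joinl. Qed.

Lemma join_hle (X Y : C) (a b c : Hom C X Y) : hle a c -> hle b c -> hle (join a b) c.
Proof. unfold hle; intros Hac Hbc. rewrite <- join_assoc, Hbc, Hac. reflexivity. Qed.

Lemma join_hle_inv (X Y : C) (a b c : Hom C X Y) :
  hle (join a b) c -> hle a c /\ hle b c.
Proof.
  intros Habc. split; eapply hle_trans; [apply hle_joinl | exact Habc | apply hle_joinr | exact Habc].
Qed.

Lemma hle_join2 (X Y : C) (a b a' b' : Hom C X Y) :
  hle a a' -> hle b b' -> hle (join a b) (join a' b').
Proof.
  intros Ha Hb. apply join_hle.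
  - eapply hle_trans; [exact Ha | apply hle_joinl].
  - eapply hle_trans; [exact Hb | apply hle_joinr].
Qed.

Lemma hle_comp2l (X Y Z : C) (g1 g2 : Hom C Y Z) (f : Hom C X Y) :
  hle g1 g2 -> hle (comp g1 f) (comp g2 f).
Proof. unfold hle; intros Hg. rewrite <- comp_join_l, Hg. reflexivity. Qed.

Lemma hle_comp2r (X Y Z : C) (g : Hom C Y Z) (f1 f2 : Hom C X Y) :
  hle f1 f2 -> hle (comp g f1) (comp g f2).
Proof. unfold hle; intros Hf. rewrite <- comp_join_r, Hf. reflexivity. Qed.

Lemma least_prefixpoint_fix (X Y : C) (F : Hom C X Y -> Hom C X Y) (x : Hom C X Y) :
  (forall a b, hle a b -> hle (F a) (F b)) -> least_prefixpoint F x -> F x = x.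
Proof. intros F_mono [Hpre Hleast]. apply hle_antisym; auto. Qed.

End HomOrder.

Section KleeneKozenStarAxioms.

Variable C : JSLCategory.
Variable star : forall X : C, Hom C X X -> Hom C X X.
Hypothesis star_KK : KK_star star.

Lemma KK_star_unfold_r (X : C) (f : Hom C X X) :
  star X f = join (idm X) (comp (star X f) f).
Proof.
  pose proof (proj1 star_KK X X f (idm X)) as Hlpp. rewrite comp_id_l in Hlpp.
  symmetry. apply (@least_prefixpoint_fix C X X (fun x => join (idm X) (comp x f))); auto.
  intros a b Hab. apply hle_join2; [apply hle_refl | apply hle_comp2l, Hab].
Qed.

Lemma KK_star_unfold_l (X : C) (f : Hom C X X) :
  star X f = join (idm X) (comp f (star X f)).
Proof.
  pose proof (proj2 star_KK X X f (idm X)) as Hlpp. rewrite comp_id_r in Hlpp.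
  symmetry. apply (@least_prefixpoint_fix C X X (fun x => join (idm X) (comp f x))); auto.
  intros a b Hab. apply hle_join2; [apply hle_refl | apply hle_comp2r, Hab].
Qed.

Lemma KK_star_le_r (X : C) (f : Hom C X X) (y : Hom C X X) :
  hle (join (idm X) (comp y f)) y -> hle (star X f) y.
Proof.
  intros Hy. pose proof (proj2 (proj1 star_KK X X f (idm X)) y Hy) as Hle.
  rewrite comp_id_l in Hle. exact Hle.
Qed.

Lemma KK_star_id (X : C) : star X (idm X) = idm X.
Proof.
  apply hle_antisym.
  - apply KK_star_le_r. rewrite comp_id_r. apply hle_eq, join_idem.
  - rewrite KK_star_unfold_r, comp_id_r. apply hle_joinl.
Qed.

Lemma KK_star_join_id (X : C) (f : Hom C X X) :
  star X f = star X (join f (idm X)).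
Proof.
  apply hle_antisym; apply KK_star_le_r.
  - rewrite (KK_star_unfold_r _ (join f (idm X))) at 2.
    apply hle_join2; [apply hle_refl | apply hle_comp2r, hle_joinl].
  - apply hle_eq.
    rewrite comp_join_r, comp_id_r, join_assoc, <- KK_star_unfold_r. apply join_idem.
Qed.

Lemma KK_star_simulation (X Y : C) (g : Hom C Y Y) (h : Hom C X X) (k : Hom C Y X) :
  comp h k = comp k g -> comp (star X h) k = comp k (star Y g).
Proof.
  intros Hhk. apply hle_antisym.
  - apply (proj2 (proj2 star_KK Y X h k)), hle_eq.
    rewrite comp_assoc, Hhk, <- comp_assoc.
    rewrite (KK_star_unfold_l _ g) at 2.
    rewrite comp_join_r, comp_id_r. reflexivity.
  - apply (proj2 (proj1 star_KK Y X g k)), hle_eq.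
    rewrite <- comp_assoc, <- Hhk, comp_assoc.
    rewrite (KK_star_unfold_r _ h) at 2.
    rewrite comp_join_l, comp_id_l. reflexivity.
Qed.

Lemma KK_star_axioms : star_axioms star.
Proof.
  intros X Y f g h k. repeat split.
  - apply KK_star_unfold_r.
  - apply KK_star_id.
  - apply KK_star_join_id.
  - apply KK_star_simulation.
Qed.

End KleeneKozenStarAxioms.

Section StarAxiomsKleeneKozen.

Variable C : JSLCategory.
Variable star : forall X : C, Hom C X X -> Hom C X X.
Hypothesis star_ax : star_axioms star.

Lemma star_unfold_r (X : C) (f : Hom C X X) :
  star X f = join (idm X) (comp (star X f) f).
Proof. apply (star_ax X X f f f (idm X)). Qed.

Lemma star_id (X : C) : star X (idm X) = idm X.
Proof. apply (star_ax X X (idm X) (idm X) (idm X) (idm X)). Qed.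

Lemma star_join_id (X : C) (f : Hom C X X) : star X f = star X (join f (idm X)).
Proof. apply (star_ax X X f f f (idm X)). Qed.

Lemma star_simulation (X Y : C) (g : Hom C Y Y) (h : Hom C X X) (k : Hom C Y X) :
  comp h k = comp k g -> comp (star X h) k = comp k (star Y g).
Proof. apply (star_ax X Y h g h k). Qed.

Lemma star_unfold_l (X : C) (f : Hom C X X) :
  star X f = join (idm X) (comp f (star X f)).
Proof. rewrite <- (star_simulation _ _ f f f eq_refl). apply star_unfold_r. Qed.

Lemma star_ind_r (Y Z : C) (f : Hom C Y Y) (y : Hom C Y Z) :
  hle (comp y f) y -> comp y (star Y f) = y.
Proof.
  intros Hy. rewrite star_join_id, <- (star_simulation _ _ (join f (idm Y)) (idm Z) y).
  - rewrite star_id. apply comp_id_l.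
  - rewrite comp_id_l, comp_join_r, comp_id_r. symmetry. exact Hy.
Qed.

Lemma star_ind_l (X Y : C) (f : Hom C Y Y) (y : Hom C X Y) :
  hle (comp f y) y -> comp (star Y f) y = y.
Proof.
  intros Hy. rewrite star_join_id, (star_simulation _ _ (idm X) (join f (idm Y)) y).
  - rewrite star_id. apply comp_id_r.
  - rewrite comp_id_r, comp_join_l, comp_id_l. exact Hy.
Qed.

Lemma star_axioms_KK : KK_star star.
Proof.
  split.
  - intros Y Z f g. split.
    + apply hle_eq. rewrite (star_unfold_r _ f) at 2.
      rewrite comp_join_r, comp_id_r, comp_assoc. reflexivity.
    + intros y [Hg Hf]%join_hle_inv.
      rewrite <- (star_ind_r _ _ _ _ Hf). apply hle_comp2l, Hg.
  - intros X Y f h. split.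
    + apply hle_eq. rewrite (star_unfold_l _ f) at 2.
      rewrite comp_join_l, comp_id_l, comp_assoc. reflexivity.
    + intros y [Hh Hf]%join_hle_inv.
      rewrite <- (star_ind_l _ _ _ _ Hf). apply hle_comp2r, Hh.
Qed.

End StarAxiomsKleeneKozen.

Theorem proposition2 (C : JSLCategory) :
  is_KleeneKozen C <->
  exists star : forall X : C, Hom C X X -> Hom C X X, star_axioms star.
Proof.
  split; intros [star Hstar]; exists star.
  - exact (KK_star_axioms _ _ Hstar).
  - exact (star_axioms_KK _ _ Hstar).
Qed.
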